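(* Fix integers $q\ge 1$ and $k\ge 4$, and let $G(q,k)$ be the graph on vertex set $\{v_0,v_1,\ldots,v_{kq}\}$ in which, with all indices taken modulo $kq+1$, the neighbourhood of $v_i$ is $$\{v_{i-1},v_{i+1}\}\cup\{v_{i+kj+m} : m=2,3,\ldots,k-1,\ j=0,1,\ldots,q-1\}.$$ Then $G(q,k)$ is $(K_3+P_1)$-free.
   Context: $K_3+P_1$ denotes the disjoint union of a triangle and a single isolated vertex. A graph is $H$-free if it contains no induced subgraph isomorphic to $H$. *)

From mathcomp Require Import all_boot.
Set Implicit Arguments. Unset Strict Implicit. Unset Printing Implicit Defensive.

(* The graph G(q,k) on vertices v_0,...,v_{kq}, represented by 'I_(k*q+1).
   y is adjacent to x iff y is in the neighbourhood of x:
   y = x+1, y = x-1 (= x + kq), or y = x + k*j + m with 0 <= j < q and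
   2 <= m <= k-1, all indices modulo kq+1. *)
Definition Gqk_adj (q k : nat) : rel 'I_(k * q + 1) :=
  fun x y =>
    [|| val y == (val x + 1) %% (k * q + 1),
        val y == (val x + k * q) %% (k * q + 1)
      | [exists j : 'I_q, exists m : 'I_k,
           (2 <= val m) && (val y == (val x + k * val j + val m) %% (k * q + 1))]].

Definition K3P1 : rel 'I_4 :=
  fun a b => (a != b) && (val a < 3) && (val b < 3).

Definition induced_free (TH TG : finType) (H : rel TH) (G : rel TG) : Prop :=
  ~ exists f : TH -> TG, injective f /\ forall a b, G (f a) (f b) = H a b.

From mathcomp Require Import all_boot.
From mathcomp Require Import zify.

Set Implicit Arguments.
Unset Strict Implicit.
Unset Printing Implicit Defensive.

(* G(q,k) is a circulant graph on Z/n, n = kq+1: whether x ~ y depends only on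
   the offset r = y - x mod n, and x ~ y iff r is 1 or kq, or r < kq with
   r mod k >= 2.  Hence every non-neighbour of a vertex d sits at an offset
   r < kq with r mod k in {0,1}.  Two non-neighbours whose offsets agree mod k
   differ by an offset that is 0 or 1 mod k and is neither 1 nor kq, so they
   are not adjacent.  Among three non-neighbours of d two offsets agree mod k,
   so the non-neighbourhood of d contains no triangle. *)

Section Offset.

Variable n : nat.

Definition offset (x y : nat) : nat := (y + (n - x)) %% n.

Lemma offsetK x y : x <= n -> (x + offset x y) %% n = y %% n.
Proof. by move=> xn; rewrite modnDmr addnCA subnKC // modnDr. Qed.

Lemma offset_eq x y c : x < n -> y < n -> c < n ->
  (y == (x + c) %% n) = (offset x y == c).
Proof.
move=> xn yn cn; apply/eqP/eqP => [-> | <-]; last by rewrite offsetK ?modn_small ?(ltnW xn).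
by rewrite /offset modnDml -addnA addnCA subnKC ?modnDr ?modn_small ?(ltnW xn).
Qed.

Lemma offset_trans d x y : d < n -> x < n -> y < n ->
  offset x y = offset (offset d x) (offset d y).
Proof.
move=> dn xn yn; have n_gt0 : 0 < n by apply: leq_ltn_trans dn.
apply/esym/eqP; rewrite -offset_eq ?ltn_pmod // /offset modnDm.
by rewrite (_ : x + _ + _ = y + (n - d) + n) ?modnDr //; lia.
Qed.

End Offset.

Lemma ltn_mul_addr k q j m : j < q -> m < k -> k * j + m < k * q.
Proof. nia. Qed.

Section Circulant.

Variables q k : nat.
Hypothesis q_gt0 : 0 < q.
Hypothesis k_gt1 : 1 < k.

Local Notation n := (k * q + 1).

Definition adj_offset (r : nat) : bool :=
  [|| r == 1, r == k * q | (1 < r %% k) && (r < k * q)].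

Lemma Gqk_adjE (x y : 'I_n) : Gqk_adj x y = adj_offset (offset n x y).
Proof.
have kq_gt0 : 0 < k * q by rewrite muln_gt0 q_gt0 (ltnW k_gt1).
rewrite /Gqk_adj /adj_offset !offset_eq ?ltn_ord ?addn1 ?ltnS //.
congr [|| _, _ | _]; apply/existsP/andP => [[j /existsP[m /andP[m_ge2 /eqP]]] | [r_mod r_lt]].
- have jm_lt := ltn_mul_addr (ltn_ord j) (ltn_ord m).
  rewrite -addnA => /eqP; rewrite offset_eq ?ltn_ord ?addn1 ?ltnS ?(ltnW jm_lt) // => /eqP ->.
  by rewrite mulnC modnMDl modn_small ?ltn_ord // mulnC.
- set r := offset n x y in r_mod r_lt *.
  have r_div : r %/ k < q by rewrite ltn_divLR 1?mulnC // (ltnW k_gt1).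
  exists (Ordinal r_div); apply/existsP; exists (Ordinal (ltn_pmod r (ltnW k_gt1))).
  by rewrite /= r_mod -addnA (mulnC k (r %/ k)) -divn_eq offset_eq ?ltn_ord ?eqxx // addn1 ltnW.
Qed.

Lemma nonadj_offset_residue r : r < n -> ~~ adj_offset r -> r < k * q /\ r %% k <= 1.
Proof. rewrite /adj_offset; move: (r %% k) => s; lia. Qed.

Lemma same_residue_nonadj r1 r2 : r1 < k * q -> r2 < k * q -> r1 = r2 %[mod k] ->
  ~~ adj_offset (offset n r1 r2).
Proof.
rewrite /adj_offset /offset => r1_lt r2_lt r12_mod.
case: (leqP r1 r2) => r12.
- have -> : (r2 + (n - r1)) %% n = r2 - r1.
    by rewrite (_ : _ + _ = r2 - r1 + n) ?modnDr ?modn_small //; lia.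
  have r_mod : (r2 - r1) %% k = 0 by apply/eqP; rewrite -/(k %| _) -eqn_mod_dvd // r12_mod.
  rewrite r_mod /= orbF; apply/negP; case/orP => [/eqP r_1 | /eqP]; last lia.
  by rewrite r_1 modn_small in r_mod.
- have r_mod : (r2 + (n - r1)) %% k = 1.
    rewrite -[RHS](modn_small k_gt1); apply/eqP; rewrite -(eqn_modDr r1).
    rewrite (_ : _ + r1 = q * k + (r2 + 1)) ?modnMDl; last lia.
    by rewrite addnC -modnDmr -r12_mod modnDmr.
  rewrite modn_small ?r_mod /= ?orbF; last lia.
  apply/negP; case/orP => [/eqP | /eqP r_kq]; first lia.
  by rewrite r_kq mulnC modnMl in r_mod.
Qed.

Lemma Gqk_nonneighbour_offset (d x : 'I_n) :
  ~~ Gqk_adj d x -> offset n d x < k * q /\ offset n d x %% k <= 1.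
Proof. by rewrite Gqk_adjE; apply: nonadj_offset_residue; rewrite ltn_pmod ?addn1. Qed.

Lemma Gqk_nonneighbours_nonadj (d x y : 'I_n) :
  ~~ Gqk_adj d x -> ~~ Gqk_adj d y -> offset n d x = offset n d y %[mod k] ->
  ~~ Gqk_adj x y.
Proof.
move=> /Gqk_nonneighbour_offset[dx_lt _] /Gqk_nonneighbour_offset[dy_lt _] dxy_mod.
by rewrite Gqk_adjE (offset_trans (ltn_ord d) (ltn_ord x) (ltn_ord y)) same_residue_nonadj.
Qed.

End Circulant.

Theorem lemma2p4 (q k : nat) (hq : 1 <= q) (hk : 4 <= k) :
  @induced_free _ _ K3P1 (@Gqk_adj q k).
Proof.
have k_gt1 : 1 < k by apply: leq_trans hk.
move=> [f [_ f_adj]].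
pose r i := offset (k * q + 1) (f ord_max) (f i) %% k.
have nonadj (i : 'I_4) : i < 3 -> ~~ Gqk_adj (f ord_max) (f i).
  by rewrite f_adj /K3P1 /= andbF.
have r_le1 (i : 'I_4) : i < 3 -> r i <= 1.
  by move/nonadj/(Gqk_nonneighbour_offset hq k_gt1) => [].
have r_neq (i j : 'I_4) : i != j -> i < 3 -> j < 3 -> r i != r j.
  move=> ij i3 j3; apply/eqP => rij.
  have := Gqk_nonneighbours_nonadj hq k_gt1 (nonadj i i3) (nonadj j j3) rij.
  by rewrite f_adj /K3P1 ij i3 j3.
pose i0 : 'I_4 := @Ordinal 4 0 isT; pose i1 : 'I_4 := @Ordinal 4 1 isT.
pose i2 : 'I_4 := @Ordinal 4 2 isT.
move: (r_le1 i0 isT) (r_le1 i1 isT) (r_le1 i2 isT).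
move: (r_neq i0 i1 isT isT isT) (r_neq i0 i2 isT isT isT) (r_neq i1 i2 isT isT isT).
move: (r i0) (r i1) (r i2); lia.
Qed.
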